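(* Let $D=(V,E;s,t)$, $N$, and $\mathscr{B}$ be as in the context. For every jump $Q\in\mathscr{J}$ there exists either an $s$-$t$ path $P$ with $\mathscr{J}_P=\{Q\}$ or a cycle $C$ with $\mathscr{J}_C=\{Q\}$.
   Context: $D=(V,E;s,t)$ is a directed network with unit arc capacities (parallel arcs allowed), $N\subseteq E$, and every arc lies on some $s$-$t$ path and every $s$-$t$ path contains an arc of $N$. A path is a set of arcs joining a sequence of distinct vertices along the same direction. Two paths are disjoint on $N$ if they share no arc of $N$. Fix a maximum-cardinality family $\mathscr{B}$ of $s$-$t$ paths pairwise disjoint on $N$; a $\mathscr{B}$-vertex is a vertex on some path of $\mathscr{B}$. A $u$-$v$ jump is a $u$-$v$ path whose end vertices $u,v$ are $\mathscr{B}$-vertices, none of whose intermediate vertices is a $\mathscr{B}$-vertex, and which is not a single arc of a path of $\mathscr{B}$; $(u,v)$ is its jump pair; $\mathscr{J}$ is the set of all jumps. For an $s$-$t$ path or a cycle $W$, cut $W$ at each of its $\mathscr{B}$-vertices into consecutive pieces, each going from a $\mathscr{B}$-vertex to the next $\mathscr{B}$-vertex along $W$; $\mathscr{J}_W$ is the set of those pieces that are jumps (i.e. are not single arcs of paths of $\mathscr{B}$), so that $W=P_0*Q_1*P_1*\cdots*Q_r*P_r$ with $P_i$ (possibly empty) subpaths of paths of $\mathscr{B}$ and $\mathscr{J}_W=\{Q_1,\dots,Q_r\}$. *)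

(* Directed multigraph: arcs are elements of a finite type E,
   each arc e goes from [src e] to [tgt e] (parallel arcs allowed). *)
From mathcomp Require Import all_boot.
Set Implicit Arguments. Unset Strict Implicit. Unset Printing Implicit Defensive.

Section Network.
Variables (V E : finType) (src tgt : E -> V).

Fixpoint walk (u v : V) (p : seq E) : bool :=
  match p with
  | [::] => u == v
  | e :: p' => (src e == u) && walk (tgt e) v p'
  end.

Definition verts (u : V) (p : seq E) : seq V := u :: map tgt p.

Definition is_path (u v : V) (p : seq E) : bool := walk u v p && uniq (verts u p).

(* cycle: a nonempty closed walk whose vertices (other than the repeated
   start/end) are pairwise distinct *)
Definition is_cycle (c : seq E) : bool :=
  if c is e :: _ then walk (src e) (src e) c && uniq (map tgt c) else false.

Definition interior (u : V) (p : seq E) : seq V := behead (belast u (map tgt p)).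

Variables (s t : V) (N : {set E}).

Definition disjoint_on_N (P1 P2 : seq E) : bool :=
  all (fun e => (e \in N) ==> (e \notin P2)) P1.

Definition N_disjoint_family (B : seq (seq E)) : bool :=
  all (is_path s t) B && pairwise disjoint_on_N B.

Variable B : seq (seq E).

Definition Bvert (x : V) : bool := has (fun P => x \in verts s P) B.

Definition single_B_arc (q : seq E) : bool :=
  has (fun P => has (fun e => q == [:: e]) P) B.

Definition is_jump (u v : V) (q : seq E) : bool :=
  [&& q != [::], is_path u v q, Bvert u, Bvert v,
      all (fun x => ~~ Bvert x) (interior u q) & ~~ single_B_arc q].

(* Cutting a walk at its B-vertices: the pieces from a B-vertex to the next
   B-vertex.  [started] records whether a B-vertex has been met already. *)
Fixpoint pieces_aux (started : bool) (acc : seq E) (p : seq E) : seq (seq E) :=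
  match p with
  | [::] => [::]
  | e :: p' =>
      if Bvert (tgt e) then
        (if started then rcons acc e :: pieces_aux true [::] p'
         else pieces_aux true [::] p')
      else pieces_aux started (rcons acc e) p'
  end.

Definition pieces (u : V) (p : seq E) : seq (seq E) := pieces_aux (Bvert u) [::] p.

Definition path_jumps (W : seq E) : seq (seq E) :=
  [seq q <- pieces s W | ~~ single_B_arc q].

Definition cycle_jumps (C : seq E) : seq (seq E) :=
  let C' := rot (find (fun e => Bvert (src e)) C) C in
  if C' is e :: _ then [seq q <- pieces (src e) C' | ~~ single_B_arc q] else [::].

End Network.

From mathcomp Require Import all_boot.
Set Implicit Arguments. Unset Strict Implicit. Unset Printing Implicit Defensive.

(* A path of B from s through u gives an s-u path A, and
   a path of B through v gives a v-t path C; every arc of A and C lies on a path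
   of B, so all their vertices are B-vertices, whereas the inner vertices of Q
   are not. If A and C share no vertex, A Q C is an s-t path. Otherwise let w be
   the first vertex of C that lies on A: Q, then C up to w, then A from w back
   to u is a cycle. Cutting either walk at its B-vertices, every piece except Q
   is a single arc of a path of B. *)

Section Walks.
Variables (V E : finType) (src tgt : E -> V).
Local Notation walk := (walk src tgt).
Local Notation verts := (verts tgt).
Local Notation is_path := (is_path src tgt).
Local Notation interior := (interior tgt).

Lemma walk_cat x y z p1 p2 : walk x y p1 -> walk y z p2 -> walk x z (p1 ++ p2).
Proof.
elim: p1 x => [|e p IH] x /=; first by move/eqP->.
by case/andP=> -> /IH h /h.
Qed.

Lemma walk_last x y p : walk x y p -> last x (map tgt p) = y.
Proof. by elim: p x => [|e p IH] x /=; [move/eqP | case/andP=> _ /IH]. Qed.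

Lemma path_walk x y p : is_path x y p -> walk x y p.
Proof. by case/andP. Qed.

Lemma path_uniq_tgts x y p : is_path x y p -> uniq (map tgt p).
Proof. by case/andP=> _ /andP []. Qed.

Lemma path_notin_tgts x y p : is_path x y p -> x \notin map tgt p.
Proof. by case/andP=> _ /andP []. Qed.

Lemma verts_cat x p1 p2 : verts x (p1 ++ p2) = verts x p1 ++ map tgt p2.
Proof. by rewrite /verts map_cat. Qed.

Lemma verts_cat_walk x z p1 p2 : walk x z p1 ->
  verts x (p1 ++ p2) = belast x (map tgt p1) ++ verts z p2.
Proof. by move=> w; rewrite verts_cat -(walk_last w) /verts lastI cat_rcons. Qed.

Lemma tgts_interior x y p : walk x y p -> p != [::] ->
  map tgt p = rcons (interior x p) y.
Proof.
case: p => [//|e p] /= /andP [_ w] _.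
by rewrite /interior /= -(walk_last w) -lastI.
Qed.

Lemma walk_splitP (P : pred V) x y p : walk x y p -> has P (verts x p) ->
  exists p1 p2 z, [/\ p = p1 ++ p2, walk x z p1, walk z y p2, P z
                    & {in verts x p1, forall w, P w -> w = z}].
Proof.
elim: p x => [|e p IH] x /=.
  move/eqP=> <-; rewrite orbF => Px.
  by exists [::], [::], x; split=> //= w; rewrite inE => /eqP.
case/andP=> /eqP ex w; case Px: (P x) => /= h.
  exists [::], (e :: p), x; split=> //=; first by rewrite ex eqxx.
  by move=> w'; rewrite inE => /eqP.
have [p1 [p2 [z [-> w1 w2 Pz minz]]]] := IH _ w h.
exists (e :: p1), p2, z; split=> //=; first by rewrite ex eqxx w1.
by move=> w'; rewrite in_cons => /predU1P [-> | /minz //]; rewrite Px.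
Qed.

Lemma path_splitP (P : pred V) x y p : is_path x y p -> has P (verts x p) ->
  exists p1 p2 z, [/\ p = p1 ++ p2, is_path x z p1, is_path z y p2, P z
                    & {in verts x p1, forall w, P w -> w = z}].
Proof.
case/andP=> w u /(walk_splitP w) [p1 [p2 [z [ep w1 w2 Pz minz]]]].
exists p1, p2, z; split=> //; rewrite /is_path ?w1 ?w2.
  by move: u; rewrite ep verts_cat cat_uniq => /andP [].
by move: u; rewrite ep (verts_cat_walk _ w1) cat_uniq => /and3P [].
Qed.

Lemma uniq_catI (T : eqType) (a b : seq T) : uniq a -> uniq b ->
  {in a, forall x, x \notin b} -> uniq (a ++ b).
Proof.
move=> ua ub ab; rewrite cat_uniq ua ub andbT /=.
by apply/hasPn => x xb; apply/negP => /ab; rewrite xb.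
Qed.

Variable X : pred V.

Lemma path_cat3 s u v t A Q C :
  is_path s u A -> is_path u v Q -> is_path v t C -> Q != [::] ->
  {subset verts s A <= X} -> {subset map tgt C <= X} ->
  {in interior u Q, forall x, ~~ X x} ->
  ~~ has (mem (verts s A)) (verts v C) -> is_path s t (A ++ Q ++ C).
Proof.
move=> pA pQ pC nQ XA XC XQ /hasPn noAC.
have tQ := tgts_interior (path_walk pQ) nQ.
rewrite /is_path (walk_cat (path_walk pA) (walk_cat (path_walk pQ) (path_walk pC))).
rewrite verts_cat map_cat; apply: uniq_catI; first by case/andP: pA.
- apply: uniq_catI; [exact: path_uniq_tgts pQ | exact: path_uniq_tgts pC |].
  move=> x; rewrite tQ mem_rcons in_cons => /predU1P [-> | /XQ nXx].
    exact: path_notin_tgts pC.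
  by apply: contra nXx => /XC.
- move=> x xA; rewrite mem_cat negb_or; apply/andP; split.
    rewrite tQ mem_rcons in_cons negb_or; apply/andP; split.
      by apply: contraL xA => /eqP ->; apply: noAC; exact: mem_head.
    by apply: contraL (XA _ xA) => /XQ.
  by apply: contraL xA => xC; apply: noAC; rewrite /verts in_cons xC orbT.
Qed.

Lemma closed_walk_cycle x c : walk x x c -> c != [::] -> uniq (map tgt c) ->
  is_cycle src tgt c.
Proof. by case: c => [//|e c] /= /andP [/eqP ex w] _; rewrite ex eqxx w. Qed.

Lemma cycle_cat3 u v w Q C A :
  is_path u v Q -> Q != [::] -> is_path v w C -> is_path w u A ->
  {in interior u Q, forall x, ~~ X x} -> {subset map tgt C <= X} ->
  {subset map tgt A <= X} -> {in verts v C, forall x, x \in verts w A -> x = w} ->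
  is_cycle src tgt (Q ++ C ++ A).
Proof.
move=> pQ nQ pC pA XQ XC XA meetCA.
have CnA x : x \in verts v C -> x \notin map tgt A.
  move=> xC; apply/negP => xA; have := path_notin_tgts pA.
  by rewrite -(meetCA x xC) ?xA // /verts in_cons xA orbT.
apply: (@closed_walk_cycle u).
- exact: walk_cat (path_walk pQ) (walk_cat (path_walk pC) (path_walk pA)).
- by case: (Q) nQ.
rewrite !map_cat; apply: uniq_catI; first exact: path_uniq_tgts pQ.
  apply: uniq_catI; [exact: path_uniq_tgts pC | exact: path_uniq_tgts pA |].
  by move=> x xC; apply: CnA; rewrite /verts in_cons xC orbT.
move=> x; rewrite (tgts_interior (path_walk pQ) nQ) mem_rcons in_cons mem_cat.
case/predU1P=> [-> | /XQ nXx].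
  by rewrite negb_or (path_notin_tgts pC) CnA // mem_head.
by rewrite negb_or; apply/andP; split; apply: contra nXx; [move/XC | move/XA].
Qed.

Lemma path_or_cycle s u v t A Q C :
  is_path s u A -> is_path u v Q -> is_path v t C -> Q != [::] ->
  {subset verts s A <= X} -> {subset map tgt C <= X} ->
  {in interior u Q, forall x, ~~ X x} ->
  is_path s t (A ++ Q ++ C) \/
  exists A1 A2 C1 C2, [/\ A = A1 ++ A2, C = C1 ++ C2
                        & is_cycle src tgt (Q ++ C1 ++ A2)].
Proof.
move=> pA pQ pC nQ XA XC XQ.
case: (boolP (has (mem (verts s A)) (verts v C))) => meetAC; last first.
  by left; exact: path_cat3 pA pQ pC nQ XA XC XQ meetAC.
right; have [C1 [C2 [w [eC pC1 _ wA minw]]]] := path_splitP pC meetAC.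
have wA' : has (pred1 w) (verts s A) by rewrite has_pred1.
have [A1 [A2 [w' [eA pA1 pA2 /eqP ww' _]]]] := path_splitP pA wA'.
subst w'; exists A1, A2, C1, C2; split=> //.
have XC1 : {subset map tgt C1 <= X}.
  by move=> x xC1; apply: XC; rewrite eC map_cat mem_cat xC1.
have XA2 : {subset map tgt A2 <= X}.
  by move=> x xA2; apply: XA; rewrite eA verts_cat mem_cat xA2 orbT.
apply: cycle_cat3 pQ nQ pC1 pA2 XQ XC1 XA2 _ => x xC1 xA2; apply: minw => //.
change (x \in verts s A).
by rewrite eA (verts_cat_walk _ (path_walk pA1)) mem_cat xA2 orbT.
Qed.

End Walks.

Section Jumps.
Variables (V E : finType) (src tgt : E -> V) (s : V) (B : seq (seq E)).
Local Notation Bvert := (Bvert tgt s B).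
Local Notation single_B_arc := (single_B_arc B).
Local Notation is_jump := (is_jump src tgt s B).
Local Notation jumps p := [seq q <- pieces_aux tgt s B true [::] p | ~~ single_B_arc q].

Definition B_arc (e : E) : bool := has (fun P => e \in P) B.

Lemma B_arc_Bvert e : B_arc e -> Bvert (tgt e).
Proof.
by case/hasP=> P PB eP; apply/hasP; exists P; rewrite // /verts in_cons map_f ?orbT.
Qed.

Lemma B_arc_single e : B_arc e -> single_B_arc [:: e].
Proof. by case/hasP=> P PB eP; apply/hasP; exists P => //; apply/hasP; exists e. Qed.

Lemma B_arcs_tgts A : all B_arc A -> {subset map tgt A <= Bvert}.
Proof. by move=> /allP BA x /mapP [e /BA eA ->]; exact: B_arc_Bvert. Qed.

Lemma Bvert_s x : Bvert x -> Bvert s.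
Proof. by case/hasP=> P PB _; apply/hasP; exists P; rewrite // mem_head. Qed.

Lemma jumps_B_arcs_cat A p : all B_arc A -> jumps (A ++ p) = jumps p.
Proof.
elim: A => //= e A IH /andP [eB /IH <-].
by rewrite (B_arc_Bvert eB) /= (B_arc_single eB).
Qed.

Lemma pieces_aux_jump_cat u v Q p : is_jump u v Q ->
  pieces_aux tgt s B true [::] (Q ++ p) = Q :: pieces_aux tgt s B true [::] p.
Proof.
case/and5P=> nQ /andP [wQ _] _ Bv /andP [intQ _].
case/lastP: Q nQ wQ intQ => [//|Q e] nQ wQ.
have /eqP := tgts_interior wQ nQ.
rewrite map_rcons eqseq_rcons => /andP [/eqP <- /eqP ev].
rewrite all_map; suff pieces_acc acc : all (preim tgt (predC Bvert)) Q ->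
    pieces_aux tgt s B true acc (rcons Q e ++ p) =
    rcons (acc ++ Q) e :: pieces_aux tgt s B true [::] p by exact: pieces_acc.
elim: Q acc {nQ wQ} => [|e' Q IH] acc /=; first by rewrite ev Bv cats0.
by case/andP=> /negbTE -> /IH ->; rewrite cat_rcons.
Qed.

Lemma jumps_jump_cat u v Q D : is_jump u v Q -> all B_arc D -> jumps (Q ++ D) = [:: Q].
Proof.
move=> jQ BD; rewrite (pieces_aux_jump_cat _ jQ) /=.
case/and5P: jQ => _ _ _ _ /andP [_ ->].
by rewrite -[D]cats0 jumps_B_arcs_cat.
Qed.

Lemma path_jumps_jump_cat u v A Q C : is_jump u v Q -> all B_arc A -> all B_arc C ->
  path_jumps tgt s B (A ++ Q ++ C) = [:: Q].
Proof.
move=> jQ BA BC; have /and5P [_ _ Bu _ _] := jQ.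
by rewrite /path_jumps /pieces (Bvert_s Bu) jumps_B_arcs_cat // (jumps_jump_cat jQ).
Qed.

Lemma cycle_jumps_jump_cat u v Q D : is_jump u v Q -> all B_arc D ->
  cycle_jumps src tgt s B (Q ++ D) = [:: Q].
Proof.
move=> jQ BD; have /and5P [] := jQ.
case: Q jQ => [//|e Q] jQ _ /andP [/andP [/eqP eu _] _] Bu _ _.
by rewrite /cycle_jumps /= eu Bu rot0 /pieces eu Bu -cat_cons (jumps_jump_cat jQ).
Qed.

Section BPaths.
Variable t : V.
Hypothesis B_st_paths : all (is_path src tgt s t) B.

Lemma B_path_prefix u : Bvert u -> exists2 A, is_path src tgt s u A & all B_arc A.
Proof.
case/hasP=> P PB uP; have uP' : has (pred1 u) (verts tgt s P) by rewrite has_pred1.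
have [A [C [w [eP pA _ /eqP wu _]]]] := path_splitP (allP B_st_paths P PB) uP'.
subst w; exists A => //; apply/allP => e eA; apply/hasP; exists P => //.
by rewrite eP mem_cat eA.
Qed.

Lemma B_path_suffix v : Bvert v -> exists2 C, is_path src tgt v t C & all B_arc C.
Proof.
case/hasP=> P PB vP; have vP' : has (pred1 v) (verts tgt s P) by rewrite has_pred1.
have [A [C [w [eP _ pC /eqP wv _]]]] := path_splitP (allP B_st_paths P PB) vP'.
subst w; exists C => //; apply/allP => e eC; apply/hasP; exists P => //.
by rewrite eP mem_cat eC orbT.
Qed.

End BPaths.

End Jumps.

Theorem lemma3 (V E : finType) (src tgt : E -> V) (s t : V) (N : {set E})
  (hE : forall e : E, exists P, is_path src tgt s t P /\ e \in P)
  (hN : forall P, is_path src tgt s t P -> has (fun e => e \in N) P)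
  (B : seq (seq E))
  (hB : N_disjoint_family src tgt s t N B)
  (hmax : forall B', N_disjoint_family src tgt s t N B' -> size B' <= size B)
  (u v : V) (Q : seq E) (hQ : is_jump src tgt s B u v Q) :
  (exists P, is_path src tgt s t P /\
     forall q, (q \in path_jumps tgt s B P) = (q == Q)) \/
  (exists C, is_cycle src tgt C /\
     forall q, (q \in cycle_jumps src tgt s B C) = (q == Q)).
Proof.
case/andP: hB => B_st_paths _.
have /and5P [nQ pQ Bu Bv /andP [/allP intQ _]] := hQ.
have [A pA BA] := B_path_prefix B_st_paths Bu.
have [C pC BC] := B_path_suffix B_st_paths Bv.
have BvA : {subset verts tgt s A <= Bvert tgt s B}.
  move=> x; rewrite /verts in_cons => /predU1P [-> | /(B_arcs_tgts s BA)//].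
  exact: Bvert_s Bu.
case: (path_or_cycle pA pQ pC nQ BvA (B_arcs_tgts s BC) intQ).
  move=> pP; left; exists (A ++ Q ++ C); split=> // q.
  by rewrite (path_jumps_jump_cat hQ) ?mem_seq1.
move=> [A1 [A2 [C1 [C2 [eA eC cQ]]]]]; right; exists (Q ++ C1 ++ A2); split=> // q.
move: BA BC; rewrite eA eC !all_cat => /andP [_ BA2] /andP [BC1 _].
by rewrite (cycle_jumps_jump_cat hQ) ?mem_seq1 // all_cat BC1.
Qed.
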